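(* Let $G=(V,E)$ be a connected simple graph and $\pi:V\to\mathbb{N}$ an injection. For a spanning tree $T$ of $G$ define $w(T)=\sum_{uv\in E(T)}\min(\pi(u),\pi(v))$. If $T^*$ is a spanning tree of $G$ minimizing $w$, then for every edge $uv\in E(T^* )$ with $\pi(u)<\pi(v)$, the pair $(u,v)$ is good with respect to $\pi$; that is, $\pi(u)<\pi(a)$ for every common neighbour $a\in N(u)\cap N(v)$.
   Context: For a vertex $u$, $N(u)=\{v\in V: uv\in E\}$ is its open neighbourhood. Given an injection $\pi:V\to\mathbb{N}$, an ordered pair $(u,v)\in V^2$ is called good with respect to $\pi$ if $uv\in E$, $\pi(u)<\pi(v)$, and $\pi(u)<\pi(w)$ for every $w\in N(u)\cap N(v)$. *)

From mathcomp Require Import all_boot.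
Set Implicit Arguments. Unset Strict Implicit. Unset Printing Implicit Defensive.

Definition simple_graph (T : finType) (e : rel T) : Prop :=
  symmetric e /\ irreflexive e.

Definition connected_graph (T : finType) (e : rel T) : Prop :=
  forall x y : T, connect e x y.

Definition acyclic (T : finType) (t : rel T) : Prop :=
  forall s : seq T, uniq s -> 2 < size s -> ~~ cycle t s.

Definition spanning_tree (T : finType) (e t : rel T) : Prop :=
  [/\ symmetric t, subrel t e, connected_graph t & acyclic t].

(* w(t) = sum over edges uv of t of min(pi u, pi v); for injective pi each
   unordered edge is counted once, through the ordered pair (u,v) with
   pi u < pi v. *)
Definition tree_weight (T : finType) (pi : T -> nat) (t : rel T) : nat :=
  \sum_(u : T) \sum_(v : T | t u v && (pi u < pi v)) pi u.

Definition good (T : finType) (e : rel T) (pi : T -> nat) (u v : T) : Prop :=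
  [/\ e u v, pi u < pi v &
      forall w : T, e u w -> e v w -> pi u < pi w].

From mathcomp Require Import all_boot.
Set Implicit Arguments. Unset Strict Implicit. Unset Printing Implicit Defensive.

(* Deleting the edge uv from T* leaves two components, one containing u and the
   other v.  A common neighbour a with pi a < pi u lies in one of them, and
   reconnecting them by the edge av (if a is on the side of u) or ua (otherwise)
   yields a spanning tree of weight at most w(T* ) - pi u + pi a < w(T* ). *)

Section EdgeSurgery.
Variable T : finType.

Definition uedge (x y : T) : rel T :=
  fun p q => ((p, q) == (x, y)) || ((p, q) == (y, x)).

Definition del_edge (t : rel T) (x y : T) : rel T :=
  [rel p q | t p q && ~~ uedge x y p q].

Definition add_edge (t : rel T) (x y : T) : rel T :=
  [rel p q | t p q || uedge x y p q].

Lemma uedgeC x y : uedge x y =2 uedge y x.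
Proof. by move=> p q; rewrite /uedge orbC. Qed.

Lemma uedge_sym x y : symmetric (uedge x y).
Proof. by move=> p q; rewrite /uedge !xpair_eqE orbC andbC [(q == y) && _]andbC. Qed.

Lemma uedge_mem x y p q : uedge x y p q -> [:: x; y] =i [:: p; q].
Proof. by rewrite /uedge !xpair_eqE => /orP[] /andP[/eqP-> /eqP->] w; rewrite !inE // orbC. Qed.

Lemma uedge_sub (r : rel T) x y : symmetric r -> r x y -> subrel (uedge x y) r.
Proof.
by move=> sym_r rxy p q; rewrite /uedge !xpair_eqE => /orP[]/andP[/eqP-> /eqP->]; rewrite // sym_r.
Qed.

Variable t : rel T.
Hypothesis sym_t : symmetric t.

Lemma del_edge_sym x y : symmetric (del_edge t x y).
Proof. by move=> p q; rewrite /del_edge /= sym_t uedge_sym. Qed.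

Lemma add_edge_sym x y : symmetric (add_edge t x y).
Proof. by move=> p q; rewrite /add_edge /= sym_t uedge_sym. Qed.

Lemma acyclic_sub (t' : rel T) : subrel t t' -> acyclic t' -> acyclic t.
Proof. by move=> sub ac s us ss; apply: contra (ac s us ss); apply: sub_cycle. Qed.

Lemma del_edge_disconnect u v :
  acyclic t -> t u v -> u != v -> ~~ connect (del_edge t u v) u v.
Proof.
move=> ac tuv neq_uv; apply/negP => /connectP[p /shortenP[q dq uq _] vE].
case: q dq uq vE => [|w [|w' q]] dq uq vE.
- by rewrite vE eqxx in neq_uv.
- by rewrite vE /= /del_edge /uedge /= eqxx andbF in dq.
move/negP: (ac _ uq isT); apply.
have sub_d : subrel (del_edge t u v) t by move=> ? ? /andP[].
by rewrite /cycle rcons_path (sub_path sub_d dq) -vE sym_t.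
Qed.

Lemma del_edge_connect u v w :
  connected_graph t -> connect (del_edge t u v) u w || connect (del_edge t u v) v w.
Proof.
pose d := del_edge t u v.
pose C := [pred z | connect d u z || connect d v z].
have Cu : u \in C by rewrite inE connect0.
have Cuv z : z \in [:: u; v] -> z \in C by rewrite !inE => /orP[] /eqP->; rewrite connect0 ?orbT.
have closedC : closed t C.
  move=> p q tpq; have [e_pq|ne_pq] := boolP (uedge u v p q).
    by rewrite !Cuv // (uedge_mem e_pq) !inE eqxx ?orbT.
  have dpq : d p q by apply/andP.
  have dqp : d q p by rewrite /d del_edge_sym.
  apply/idP/idP; rewrite !inE => /orP[] c;
  by rewrite (connect_trans c (connect1 _)) ?orbT.
by move=> conn; rewrite -[_ || _]/(w \in C) -(closed_connect closedC (conn u w)).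
Qed.

Lemma add_edge_step x y p q :
  add_edge t x y p q -> (p \notin [:: x; y]) || (q \notin [:: x; y]) -> t p q.
Proof.
by case/orP=> // e_pq; rewrite !(uedge_mem e_pq) !inE !eqxx orbT.
Qed.

Lemma add_edge_path x y a (r : seq T) b : x \notin r -> y \notin r -> r != [::] ->
  path (add_edge t x y) a (rcons r b) -> path t a (rcons r b).
Proof.
move=> xr yr; elim: r a xr yr => [//|c r IH] a xr yr _ /= /andP[t1ac t1r].
have c_out : c \notin [:: x; y].
  by rewrite !inE negb_or (memPn xr) ?(memPn yr) ?mem_head.
rewrite (add_edge_step t1ac) ?c_out ?orbT //=.
case: r IH xr yr t1r => [|c' r] IH xr yr t1r.
  by move: t1r => /= /andP[t1cb _]; rewrite (add_edge_step t1cb) ?c_out.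
by apply: IH t1r; [move: xr | move: yr |]; rewrite // inE negb_or => /andP[].
Qed.

Lemma add_edge_cycle x y z (s : seq T) : z \in [:: x; y] -> z \notin s ->
  cycle (add_edge t x y) s -> cycle t s.
Proof.
move=> zxy zs; apply: (sub_in_cycle (P := predC1 z)); last first.
  by apply/allP => w ws /=; apply: contraNneq zs => <-.
move=> p q /= pz qz /orP[// | e_pq].
by move: zxy; rewrite (uedge_mem e_pq) !inE !(eq_sym z) (negbTE pz) (negbTE qz).
Qed.

Lemma add_edge_acyclic x y :
  acyclic t -> ~~ connect t x y -> acyclic (add_edge t x y).
Proof.
move=> ac nxy s us ss; apply/negP => cs.
have in_s z : z \in [:: x; y] -> z \in s.
  move=> zxy; apply/negPn/negP => zs; move/negP: (ac s us ss); apply.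
  exact: add_edge_cycle zxy zs cs.
have neq_xy : x != y by apply: contraNneq nxy => ->; apply: connect0.
(* Rotated to start at x, the cycle splits at y into two arcs avoiding x and y;
   a nonempty one is a path of t between x and y. *)
have [i s' rot_s] := rot_to (in_s x (mem_head _ _)).
have ys' : y \in s'.
  by move: (in_s y); rewrite -(mem_rot i s) rot_s !inE eq_sym (negbTE neq_xy) eqxx orbT; apply.
case/splitPr: ys' rot_s => q1 q2 rot_s.
move: us ss cs; rewrite -(rot_uniq i) -(size_rot i) -(rot_cycle i) rot_s.
rewrite /= mem_cat inE negb_or uniq_catC /= mem_cat negb_or.
move=> /and3P[/and3P[xq1 _ xq2] /norP[yq2 yq1] _] ss.
rewrite rcons_cat /= -cat_rcons cat_path last_rcons => /andP[p1 p2].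
have [q1_nil | q1_ne] := eqVneq q1 [::].
  have q2_ne : q2 != [::] by move: ss; rewrite q1_nil; case: (q2).
  move/negP: nxy; apply; rewrite (sym_connect_sym sym_t).
  by apply: (path_connect (add_edge_path xq2 yq2 q2_ne p2)); rewrite inE mem_rcons mem_head orbT.
move/negP: nxy; apply.
by apply: (path_connect (add_edge_path xq1 yq1 q1_ne p1)); rewrite inE mem_rcons mem_head orbT.
Qed.

End EdgeSurgery.

Section TreeWeight.
Variables (T : finType) (pi : T -> nat).

Lemma tree_weightE (r : rel T) :
  tree_weight pi r = \sum_p \sum_q (if r p q && (pi p < pi q) then pi p else 0).
Proof. by apply: eq_bigr => p _; rewrite big_mkcond. Qed.

Lemma eq_tree_weight (r1 r2 : rel T) : r1 =2 r2 -> tree_weight pi r1 = tree_weight pi r2.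
Proof. by move=> eq_r; apply: eq_bigr => p _; apply: eq_bigl => q; rewrite eq_r. Qed.

Lemma tree_weight_split (r s : rel T) :
  tree_weight pi r =
  tree_weight pi [rel p q | r p q && ~~ s p q] + tree_weight pi [rel p q | r p q && s p q].
Proof.
rewrite /tree_weight -big_split; apply: eq_bigr => p _ /=.
rewrite (bigID (s p)) addnC; congr (_ + _); apply: eq_bigl => q; by rewrite andbAC.
Qed.

Lemma tree_weight_sub (r r1 r2 : rel T) : (forall p q, r p q -> r1 p q || r2 p q) ->
  tree_weight pi r <= tree_weight pi r1 + tree_weight pi r2.
Proof.
move=> sub_r; rewrite !tree_weightE -big_split; apply: leq_sum => p _.
rewrite -big_split; apply: leq_sum => q _ /=.
case: ifP => // /andP[/sub_r /orP[] -> lt_pq]; by rewrite lt_pq ?leq_addr ?leq_addl.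
Qed.

Lemma tree_weight_uedge x y : pi x != pi y -> tree_weight pi (uedge x y) = minn (pi x) (pi y).
Proof.
move=> neq_xy; wlog lt_xy : x y neq_xy / pi x < pi y => [W|].
  have [lt | ge] := boolP (pi x < pi y); first exact: W.
  have lt : pi y < pi x by rewrite ltn_neqAle eq_sym neq_xy leqNgt.
  by rewrite (eq_tree_weight (uedgeC x y)) minnC W // eq_sym.
rewrite /tree_weight pair_big_dep (big_pred1 (x, y)) /=; first by rewrite (minn_idPl (ltnW lt_xy)).
case=> p q; rewrite /= /uedge; case: eqP => [[-> ->] // | _] /=.
by case: eqP => // [[-> ->]]; rewrite ltnNge ltnW.
Qed.

End TreeWeight.

Section Exchange.
Variables (T : finType) (e t : rel T) (u v : T).
Hypotheses (sym_e : symmetric e) (tree_t : spanning_tree e t) (t_uv : t u v).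

Lemma exchange_spanning_tree x y : u != v ->
  connect (del_edge t u v) u x -> connect (del_edge t u v) y v -> e x y ->
  spanning_tree e (add_edge (del_edge t u v) x y).
Proof.
case: tree_t => sym_t sub_te conn_t ac_t neq_uv dux dyv exy.
set d := del_edge t u v; set t1 := add_edge d x y.
have sym_d : symmetric d := del_edge_sym sym_t u v.
have sub_dt : subrel d t by move=> p q /andP[].
have ndxy : ~~ connect d x y.
  apply: contra (del_edge_disconnect sym_t ac_t t_uv neq_uv) => dxy.
  exact: connect_trans dux (connect_trans dxy dyv).
have lift : subrel (connect d) (connect t1).
  by apply: connect_sub => p q dpq; apply: connect1; apply/orP; left.
have t1u w : connect t1 u w.
  have t1uv : connect t1 u v.
    apply: connect_trans (lift _ _ dux) (connect_trans (connect1 _) (lift _ _ dyv)).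
    by apply/orP; right; rewrite /uedge eqxx.
  by case/orP: (del_edge_connect sym_t u v w conn_t) => /lift //; apply: connect_trans.
split.
- exact: add_edge_sym.
- by move=> p q /orP[/sub_dt/sub_te // | /(uedge_sub sym_e exy)].
- move=> p q; apply: connect_trans _ (t1u q).
  by rewrite /t1 (sym_connect_sym (add_edge_sym sym_d x y)) t1u.
- exact: add_edge_acyclic sym_d x y (acyclic_sub sub_dt ac_t) ndxy.
Qed.

Lemma tree_weight_exchange (pi : T -> nat) x y : pi u != pi v -> pi x != pi y ->
  tree_weight pi (add_edge (del_edge t u v) x y) + minn (pi u) (pi v)
  <= tree_weight pi t + minn (pi x) (pi y).
Proof.
case: tree_t => sym_t _ _ _ neq_piuv neq_pixy.
have -> : tree_weight pi t = tree_weight pi (del_edge t u v) + tree_weight pi (uedge u v).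
  rewrite (tree_weight_split pi t (uedge u v)); congr (_ + _).
  apply: eq_tree_weight => p q /=; apply/andP/idP => [[] // | e_pq].
  by split; first exact: uedge_sub sym_t t_uv _ _ e_pq.
rewrite -(tree_weight_uedge neq_piuv) -(tree_weight_uedge neq_pixy) addnAC leq_add2r.
exact: tree_weight_sub.
Qed.

End Exchange.

Theorem mainTheorem4 (T : finType) (e : rel T) (pi : T -> nat)
  (He : simple_graph e) (Hconn : connected_graph e) (Hpi : injective pi)
  (tstar : rel T) (Ht : spanning_tree e tstar)
  (Hmin : forall t : rel T, spanning_tree e t ->
            tree_weight pi tstar <= tree_weight pi t) :
  forall u v : T, tstar u v -> pi u < pi v -> good e pi u v.
Proof.
move=> u v t_uv lt_uv; have [sym_e irr_e] := He; have [sym_t sub_te conn_t _] := Ht.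
have neq_pi x y : e x y -> pi x != pi y.
  by move=> exy; rewrite (inj_eq Hpi); apply: contraTneq exy => ->; rewrite irr_e.
have e_uv := sub_te _ _ t_uv.
split=> // a e_ua e_va; rewrite ltnNge; apply/negP => le_au.
have lt_au : pi a < pi u by rewrite ltn_neqAle le_au andbT eq_sym neq_pi.
pose d := del_edge tstar u v.
suff [x [y [dux dyv exy lt_xy]]] : exists x y,
    [/\ connect d u x, connect d y v, e x y & minn (pi x) (pi y) < pi u].
  have neq_uv : u != v by apply: contraTneq e_uv => ->; rewrite irr_e.
  have min_t := Hmin _ (exchange_spanning_tree sym_e Ht t_uv neq_uv dux dyv exy).
  have := leq_trans (tree_weight_exchange Ht t_uv (neq_pi _ _ e_uv) (neq_pi _ _ exy))
                    (leq_add min_t (leqnn _)).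
  by rewrite (minn_idPl (ltnW lt_uv)) leq_add2l leqNgt lt_xy.
have [dua | ndua] := boolP (connect d u a).
  exists a, v; split=> //; first by rewrite sym_e.
  by rewrite (minn_idPl (ltnW (ltn_trans lt_au lt_uv))).
exists u, a; split=> //; last by rewrite (minn_idPr (ltnW lt_au)).
have := del_edge_connect sym_t u v a conn_t; rewrite (negbTE ndua) /=.
by rewrite (sym_connect_sym (del_edge_sym sym_t u v)).
Qed.
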